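(* Let $c_1>0>c_2$, $L=c_1-c_2$, $t_0>0$, with $u,q_1,q_2$ as in the context. For $t\in[0,t_0]$ define $$y_l(t,\xi)=\xi+\ln L-\ln\!\Big(L+\big(c_1e^{-c_1(t-t_0)}-c_1e^{c_1t_0}-c_2e^{-c_2(t-t_0)}+c_2e^{c_2t_0}\big)e^{\xi}\Big),\quad \xi<q_1(0),$$ $$y_r(t,\xi)=\xi-\ln L+\ln\!\Big(L+\big(c_1e^{c_1(t-t_0)}-c_1e^{-c_1t_0}-c_2e^{c_2(t-t_0)}+c_2e^{-c_2t_0}\big)e^{-\xi}\Big),\quad \xi>q_2(0).$$ Then these are well defined, $y_l(0,\xi)=\xi$, $y_r(0,\xi)=\xi$, $y_l(t,\xi)<q_1(t)$, $y_r(t,\xi)>q_2(t)$, and for $0\le t<t_0$, $$\partial_t y_l(t,\xi)=u(t,y_l(t,\xi)),\qquad \partial_t y_r(t,\xi)=u(t,y_r(t,\xi)).$$ Moreover $u(t,y_l(t,\xi))$ equals $$\frac{\big(c_1^2e^{-c_1(t-t_0)}-c_2^2e^{-c_2(t-t_0)}\big)e^{\xi}}{L+\big(c_1e^{-c_1(t-t_0)}-c_1e^{c_1t_0}-c_2e^{-c_2(t-t_0)}+c_2e^{c_2t_0}\big)e^{\xi}} .$$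
   Context: For $t\neq t_0$ define $$p_1(t)=\frac{c_1-c_2e^{L(t-t_0)}}{1-e^{L(t-t_0)}},\qquad p_2(t)=\frac{c_2-c_1e^{L(t-t_0)}}{1-e^{L(t-t_0)}},$$ and for all $t$ define $$q_1(t)=\ln L+c_1(t-t_0)-\ln\big(c_1-c_2e^{L(t-t_0)}\big),\qquad q_2(t)=-\ln L+c_2(t-t_0)+\ln\big(c_1e^{L(t-t_0)}-c_2\big).$$ Set $u(t,x)=p_1(t)e^{-|x-q_1(t)|}+p_2(t)e^{-|x-q_2(t)|}$ for $x\in\mathbb R$, $t<t_0$. *)

From Stdlib Require Import Reals Lra.
Open Scope R_scope.

Definition LL (c1 c2 : R) : R := c1 - c2.

Definition p1 (c1 c2 t0 t : R) : R :=
  (c1 - c2 * exp (LL c1 c2 * (t - t0))) / (1 - exp (LL c1 c2 * (t - t0))).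
Definition p2 (c1 c2 t0 t : R) : R :=
  (c2 - c1 * exp (LL c1 c2 * (t - t0))) / (1 - exp (LL c1 c2 * (t - t0))).

Definition q1 (c1 c2 t0 t : R) : R :=
  ln (LL c1 c2) + c1 * (t - t0) - ln (c1 - c2 * exp (LL c1 c2 * (t - t0))).
Definition q2 (c1 c2 t0 t : R) : R :=
  - ln (LL c1 c2) + c2 * (t - t0) + ln (c1 * exp (LL c1 c2 * (t - t0)) - c2).

(* the peakon-antipeakon profile u(t,x), meaningful for t < t0 *)
Definition u (c1 c2 t0 t x : R) : R :=
  p1 c1 c2 t0 t * exp (- Rabs (x - q1 c1 c2 t0 t))
  + p2 c1 c2 t0 t * exp (- Rabs (x - q2 c1 c2 t0 t)).

Definition Al (c1 c2 t0 t : R) : R :=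
  c1 * exp (- c1 * (t - t0)) - c1 * exp (c1 * t0)
  - c2 * exp (- c2 * (t - t0)) + c2 * exp (c2 * t0).
Definition Ar (c1 c2 t0 t : R) : R :=
  c1 * exp (c1 * (t - t0)) - c1 * exp (- c1 * t0)
  - c2 * exp (c2 * (t - t0)) + c2 * exp (- c2 * t0).

Definition y_left (c1 c2 t0 t xi : R) : R :=
  xi + ln (LL c1 c2) - ln (LL c1 c2 + Al c1 c2 t0 t * exp xi).
Definition y_right (c1 c2 t0 t xi : R) : R :=
  xi - ln (LL c1 c2) + ln (LL c1 c2 + Ar c1 c2 t0 t * exp (- xi)).

From Stdlib Require Import Reals Lra.
From Coquelicot Require Import Coquelicot.
Open Scope R_scope.

(* Everything is a rational function of [exp (c1 (t - t0))], [exp (c2 (t - t0))] and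
   [exp xi].  With [Kl t = c1 e^(-c1 (t - t0)) - c2 e^(-c2 (t - t0))] and
   [Kr t = c1 e^(c1 (t - t0)) - c2 e^(c2 (t - t0))], both positive, one has
   [e^q1 = L / Kl], [e^q2 = Kr / L], [Al t = Kl t - Kl 0], [Ar t = Kr t - Kr 0].
   Hence [xi < q1 0] reads [e^xi Kl 0 < L], which makes the denominator of [y_left]
   positive and is equivalent to [y_left t xi < q1 t] for every t; symmetrically on the
   right.  Left of both peaks [u = e^x (p1 e^-q1 + p2 e^-q2)], and the bracket
   simplifies to [(c1^2 e^(-c1 (t - t0)) - c2^2 e^(-c2 (t - t0))) / L], which is exactly
   the time derivative of [y_left] divided by [e^y_left]. *)

Lemma exp_minus (x y : R) : exp (x - y) = exp x / exp y.
Proof. unfold Rminus, Rdiv. now rewrite exp_plus, exp_Ropp. Qed.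

Lemma exp_opp_mult (c x : R) : exp (- c * x) = / exp (c * x).
Proof. rewrite <- exp_Ropp. f_equal. ring. Qed.

Lemma u_left_of_peaks (c1 c2 t0 t x : R) :
  x <= q1 c1 c2 t0 t -> x <= q2 c1 c2 t0 t ->
  u c1 c2 t0 t x =
  exp x * (p1 c1 c2 t0 t / exp (q1 c1 c2 t0 t) + p2 c1 c2 t0 t / exp (q2 c1 c2 t0 t)).
Proof.
  intros h1 h2. unfold u.
  rewrite !Rabs_left1, !Ropp_involutive, !exp_minus by lra.
  unfold Rdiv. ring.
Qed.

Lemma u_right_of_peaks (c1 c2 t0 t x : R) :
  q1 c1 c2 t0 t <= x -> q2 c1 c2 t0 t <= x ->
  u c1 c2 t0 t x =
  exp (- x) * (p1 c1 c2 t0 t * exp (q1 c1 c2 t0 t) + p2 c1 c2 t0 t * exp (q2 c1 c2 t0 t)).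
Proof.
  intros h1 h2. unfold u.
  rewrite !Rabs_right, !Ropp_minus_distr, !exp_minus, exp_Ropp by lra.
  unfold Rdiv. ring.
Qed.

Section PeakonAntipeakon.

Variables c1 c2 t0 : R.
Hypotheses (hc1 : 0 < c1) (hc2 : c2 < 0).

Local Notation L := (LL c1 c2).

Definition Kl (t : R) : R := c1 * exp (- c1 * (t - t0)) - c2 * exp (- c2 * (t - t0)).
Definition Kr (t : R) : R := c1 * exp (c1 * (t - t0)) - c2 * exp (c2 * (t - t0)).

(* [- Vl] and [Vr] are the time derivatives of [Kl] and [Kr]. *)
Definition Vl (t : R) : R :=
  c1 ^ 2 * exp (- c1 * (t - t0)) - c2 ^ 2 * exp (- c2 * (t - t0)).
Definition Vr (t : R) : R := c1 ^ 2 * exp (c1 * (t - t0)) - c2 ^ 2 * exp (c2 * (t - t0)).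

Lemma LL_pos : 0 < L.
Proof. unfold LL; lra. Qed.

Lemma pos_c1_sub_c2 (a b : R) : 0 < a -> 0 < b -> 0 < c1 * a - c2 * b.
Proof. intros. nra. Qed.

Lemma Kl_pos (t : R) : 0 < Kl t.
Proof. apply pos_c1_sub_c2; apply exp_pos. Qed.

Lemma Kr_pos (t : R) : 0 < Kr t.
Proof. apply pos_c1_sub_c2; apply exp_pos. Qed.

Lemma Al_Kl (t : R) : Al c1 c2 t0 t = Kl t - Kl 0.
Proof.
  unfold Al, Kl.
  replace (- c1 * (0 - t0)) with (c1 * t0) by ring.
  replace (- c2 * (0 - t0)) with (c2 * t0) by ring.
  ring.
Qed.

Lemma Ar_Kr (t : R) : Ar c1 c2 t0 t = Kr t - Kr 0.
Proof.
  unfold Ar, Kr.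
  replace (c1 * (0 - t0)) with (- c1 * t0) by ring.
  replace (c2 * (0 - t0)) with (- c2 * t0) by ring.
  ring.
Qed.

Lemma exp_LL_mult (s : R) : exp (L * s) = exp (c1 * s) / exp (c2 * s).
Proof. rewrite <- exp_minus. f_equal. unfold LL. ring. Qed.

Lemma exp_q1 (t : R) : exp (q1 c1 c2 t0 t) = L / Kl t.
Proof.
  assert (hw : 0 < c1 - c2 * exp (L * (t - t0))).
  { pose proof (pos_c1_sub_c2 1 _ Rlt_0_1 (exp_pos (L * (t - t0)))). lra. }
  unfold q1. rewrite exp_minus, exp_plus, !exp_ln by (exact LL_pos || exact hw).
  unfold Kl. rewrite exp_LL_mult, !exp_opp_mult.
  pose proof (exp_pos (c1 * (t - t0))). pose proof (exp_pos (c2 * (t - t0))).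
  pose proof (pos_c1_sub_c2 (exp (c2 * (t - t0))) (exp (c1 * (t - t0)))).
  field. repeat split; lra.
Qed.

Lemma exp_q2 (t : R) : exp (q2 c1 c2 t0 t) = Kr t / L.
Proof.
  assert (hw : 0 < c1 * exp (L * (t - t0)) - c2).
  { pose proof (pos_c1_sub_c2 _ 1 (exp_pos (L * (t - t0))) Rlt_0_1). lra. }
  unfold q2. rewrite !exp_plus, exp_Ropp, !exp_ln by (exact LL_pos || exact hw).
  unfold Kr. rewrite exp_LL_mult.
  pose proof (exp_pos (c2 * (t - t0))). pose proof LL_pos.
  field. lra.
Qed.

Lemma lt_q1_0 (xi : R) : xi < q1 c1 c2 t0 0 -> exp xi * Kl 0 < L.
Proof.
  intro hxi. apply exp_increasing in hxi. rewrite exp_q1 in hxi.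
  pose proof (Kl_pos 0).
  apply (Rmult_lt_compat_r (Kl 0)) in hxi; [|lra].
  unfold Rdiv in hxi. now rewrite Rmult_assoc, Rinv_l, Rmult_1_r in hxi by lra.
Qed.

Lemma gt_q2_0 (xi : R) : xi > q2 c1 c2 t0 0 -> Kr 0 < exp xi * L.
Proof.
  intro hxi. apply exp_increasing in hxi. rewrite exp_q2 in hxi.
  pose proof LL_pos.
  apply (Rmult_lt_compat_r L) in hxi; [|lra].
  unfold Rdiv in hxi. now rewrite Rmult_assoc, Rinv_l, Rmult_1_r in hxi by lra.
Qed.

Lemma y_left_denom_pos (t xi : R) :
  xi < q1 c1 c2 t0 0 -> 0 < L + Al c1 c2 t0 t * exp xi.
Proof.
  intro hxi. apply lt_q1_0 in hxi. rewrite Al_Kl.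
  pose proof (Kl_pos t). pose proof (exp_pos xi). nra.
Qed.

Lemma y_right_denom_pos (t xi : R) :
  xi > q2 c1 c2 t0 0 -> 0 < L + Ar c1 c2 t0 t * exp (- xi).
Proof.
  intro hxi. apply gt_q2_0 in hxi. rewrite Ar_Kr, exp_Ropp.
  pose proof (Kr_pos t). pose proof (exp_pos xi). pose proof LL_pos.
  replace (L + (Kr t - Kr 0) * / exp xi) with ((exp xi * L - Kr 0 + Kr t) / exp xi)
    by (field; lra).
  apply Rdiv_lt_0_compat; lra.
Qed.

Lemma exp_y_left (t xi : R) : xi < q1 c1 c2 t0 0 ->
  exp (y_left c1 c2 t0 t xi) = exp xi * L / (L + Al c1 c2 t0 t * exp xi).
Proof.
  intro hxi. pose proof (y_left_denom_pos t xi hxi). pose proof LL_pos.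
  unfold y_left. now rewrite exp_minus, exp_plus, !exp_ln.
Qed.

Lemma exp_y_right (t xi : R) : xi > q2 c1 c2 t0 0 ->
  exp (y_right c1 c2 t0 t xi) = exp xi * (L + Ar c1 c2 t0 t * exp (- xi)) / L.
Proof.
  intro hxi. pose proof (y_right_denom_pos t xi hxi). pose proof LL_pos.
  unfold y_right. rewrite exp_plus, exp_minus, !exp_ln by assumption.
  field. lra.
Qed.

Lemma y_left_0 (xi : R) : y_left c1 c2 t0 0 xi = xi.
Proof.
  unfold y_left. rewrite Al_Kl, Rminus_diag, Rmult_0_l, Rplus_0_r. ring.
Qed.

Lemma y_right_0 (xi : R) : y_right c1 c2 t0 0 xi = xi.
Proof.
  unfold y_right. rewrite Ar_Kr, Rminus_diag, Rmult_0_l, Rplus_0_r. ring.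
Qed.

Lemma y_left_lt_q1 (t xi : R) : xi < q1 c1 c2 t0 0 -> y_left c1 c2 t0 t xi < q1 c1 c2 t0 t.
Proof.
  intro hxi. apply exp_lt_inv. rewrite exp_y_left, exp_q1, Al_Kl by exact hxi.
  pose proof (y_left_denom_pos t xi hxi) as hD. rewrite Al_Kl in hD.
  apply lt_q1_0 in hxi.
  pose proof (Kl_pos t). pose proof (exp_pos xi). pose proof LL_pos.
  apply Rlt_0_minus.
  replace (L / Kl t - exp xi * L / (L + (Kl t - Kl 0) * exp xi))
    with (L * (L - exp xi * Kl 0) / (Kl t * (L + (Kl t - Kl 0) * exp xi)))
    by (field; lra).
  apply Rdiv_lt_0_compat; apply Rmult_lt_0_compat; lra.
Qed.

Lemma y_right_gt_q2 (t xi : R) : xi > q2 c1 c2 t0 0 -> y_right c1 c2 t0 t xi > q2 c1 c2 t0 t.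
Proof.
  intro hxi. apply exp_lt_inv. rewrite exp_y_right, exp_q2, Ar_Kr, exp_Ropp by exact hxi.
  apply gt_q2_0 in hxi.
  pose proof (exp_pos xi). pose proof LL_pos.
  apply Rmult_lt_reg_r with L; [lra|].
  unfold Rdiv. rewrite !Rmult_assoc, Rinv_l, !Rmult_1_r by lra.
  replace (exp xi * (L + (Kr t - Kr 0) * / exp xi)) with (exp xi * L - Kr 0 + Kr t)
    by (field; lra).
  lra.
Qed.

Lemma exp_c1_lt_exp_c2 (t : R) : t < t0 -> exp (c1 * (t - t0)) < exp (c2 * (t - t0)).
Proof. intro. apply exp_increasing. nra. Qed.

(* The peaks collide exactly at [t = t0]. *)
Lemma Kl_Kr_sub_LL_sqr (t : R) :
  Kl t * Kr t - L ^ 2 =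
  - c1 * c2 * (exp (c1 * (t - t0)) - exp (c2 * (t - t0))) ^ 2
  / (exp (c1 * (t - t0)) * exp (c2 * (t - t0))).
Proof.
  unfold Kl, Kr, LL. rewrite !exp_opp_mult.
  pose proof (exp_pos (c1 * (t - t0))). pose proof (exp_pos (c2 * (t - t0))).
  field. lra.
Qed.

Lemma q1_lt_q2 (t : R) : t < t0 -> q1 c1 c2 t0 t < q2 c1 c2 t0 t.
Proof.
  intro ht. apply exp_lt_inv. rewrite exp_q1, exp_q2.
  pose proof (exp_c1_lt_exp_c2 t ht).
  pose proof (exp_pos (c1 * (t - t0))). pose proof (exp_pos (c2 * (t - t0))).
  pose proof (Kl_pos t). pose proof LL_pos.
  assert (hgap : 0 < Kl t * Kr t - L ^ 2).
  { rewrite Kl_Kr_sub_LL_sqr. apply Rdiv_lt_0_compat; [apply Rmult_lt_0_compat|]; nra. }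
  apply Rmult_lt_reg_r with (Kl t * L); [nra|].
  replace (L / Kl t * (Kl t * L)) with (L ^ 2) by (field; lra).
  replace (Kr t / L * (Kl t * L)) with (Kl t * Kr t) by (field; lra).
  lra.
Qed.

Lemma peak_weights_left (t : R) : t < t0 ->
  p1 c1 c2 t0 t / exp (q1 c1 c2 t0 t) + p2 c1 c2 t0 t / exp (q2 c1 c2 t0 t) = Vl t / L.
Proof.
  intro ht. rewrite exp_q1, exp_q2.
  pose proof (exp_c1_lt_exp_c2 t ht).
  unfold p1, p2, Vl, Kl, Kr. rewrite exp_LL_mult, !exp_opp_mult.
  pose proof (exp_pos (c1 * (t - t0))). pose proof (exp_pos (c2 * (t - t0))).
  unfold LL. field. repeat split; nra.
Qed.

Lemma peak_weights_right (t : R) : t < t0 ->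
  p1 c1 c2 t0 t * exp (q1 c1 c2 t0 t) + p2 c1 c2 t0 t * exp (q2 c1 c2 t0 t) = Vr t / L.
Proof.
  intro ht. rewrite exp_q1, exp_q2.
  pose proof (exp_c1_lt_exp_c2 t ht).
  unfold p1, p2, Vr, Kl, Kr. rewrite exp_LL_mult, !exp_opp_mult.
  pose proof (exp_pos (c1 * (t - t0))). pose proof (exp_pos (c2 * (t - t0))).
  unfold LL. field. repeat split; nra.
Qed.

Lemma u_y_left (t xi : R) : t < t0 -> xi < q1 c1 c2 t0 0 ->
  u c1 c2 t0 t (y_left c1 c2 t0 t xi) = Vl t * exp xi / (L + Al c1 c2 t0 t * exp xi).
Proof.
  intros ht hxi.
  pose proof (y_left_lt_q1 t xi hxi). pose proof (q1_lt_q2 t ht).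
  pose proof (y_left_denom_pos t xi hxi). pose proof LL_pos.
  rewrite u_left_of_peaks, peak_weights_left, exp_y_left by (assumption || lra).
  field. lra.
Qed.

Lemma u_y_right (t xi : R) : t < t0 -> xi > q2 c1 c2 t0 0 ->
  u c1 c2 t0 t (y_right c1 c2 t0 t xi) = Vr t * exp (- xi) / (L + Ar c1 c2 t0 t * exp (- xi)).
Proof.
  intros ht hxi.
  pose proof (y_right_gt_q2 t xi hxi). pose proof (q1_lt_q2 t ht).
  pose proof (y_right_denom_pos t xi hxi). pose proof LL_pos. pose proof (exp_pos xi).
  rewrite u_right_of_peaks, peak_weights_right, exp_Ropp, exp_y_right by (assumption || lra).
  rewrite exp_Ropp in *.
  assert (0 < L * exp xi + Ar c1 c2 t0 t).
  { replace (L * exp xi + Ar c1 c2 t0 t) with ((L + Ar c1 c2 t0 t * / exp xi) * exp xi)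
      by (field; lra).
    now apply Rmult_lt_0_compat. }
  field. repeat split; lra.
Qed.

Lemma y_left_derive (t xi : R) : xi < q1 c1 c2 t0 0 ->
  derivable_pt_lim (fun s => y_left c1 c2 t0 s xi) t
    (Vl t * exp xi / (L + Al c1 c2 t0 t * exp xi)).
Proof.
  intro hxi. pose proof (y_left_denom_pos t xi hxi) as hD.
  apply is_derive_Reals. unfold y_left, Al, Vl in *.
  auto_derive; [exact hD|].
  replace (t + - t0) with (t - t0) by ring. field. lra.
Qed.

Lemma y_right_derive (t xi : R) : xi > q2 c1 c2 t0 0 ->
  derivable_pt_lim (fun s => y_right c1 c2 t0 s xi) t
    (Vr t * exp (- xi) / (L + Ar c1 c2 t0 t * exp (- xi))).
Proof.
  intro hxi. pose proof (y_right_denom_pos t xi hxi) as hD.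
  apply is_derive_Reals. unfold y_right, Ar, Vr in *.
  auto_derive; [exact hD|].
  replace (t + - t0) with (t - t0) by ring. field. lra.
Qed.

End PeakonAntipeakon.

Theorem mainTheorem5 (c1 c2 t0 : R) (hc1 : 0 < c1) (hc2 : c2 < 0) (ht0 : 0 < t0) :
  (0 < LL c1 c2 /\
   (forall t, 0 < c1 - c2 * exp (LL c1 c2 * (t - t0))) /\
   (forall t, 0 < c1 * exp (LL c1 c2 * (t - t0)) - c2) /\
   (forall t xi, 0 <= t <= t0 -> xi < q1 c1 c2 t0 0 ->
      0 < LL c1 c2 + Al c1 c2 t0 t * exp xi) /\
   (forall t xi, 0 <= t <= t0 -> xi > q2 c1 c2 t0 0 ->
      0 < LL c1 c2 + Ar c1 c2 t0 t * exp (- xi))) /\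
  (forall xi, xi < q1 c1 c2 t0 0 -> y_left c1 c2 t0 0 xi = xi) /\
  (forall xi, xi > q2 c1 c2 t0 0 -> y_right c1 c2 t0 0 xi = xi) /\
  (forall t xi, 0 <= t <= t0 -> xi < q1 c1 c2 t0 0 ->
     y_left c1 c2 t0 t xi < q1 c1 c2 t0 t) /\
  (forall t xi, 0 <= t <= t0 -> xi > q2 c1 c2 t0 0 ->
     y_right c1 c2 t0 t xi > q2 c1 c2 t0 t) /\
  (forall t xi, 0 <= t < t0 -> xi < q1 c1 c2 t0 0 ->
     derivable_pt_lim (fun s => y_left c1 c2 t0 s xi) t
       (u c1 c2 t0 t (y_left c1 c2 t0 t xi))) /\
  (forall t xi, 0 <= t < t0 -> xi > q2 c1 c2 t0 0 ->
     derivable_pt_lim (fun s => y_right c1 c2 t0 s xi) t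
       (u c1 c2 t0 t (y_right c1 c2 t0 t xi))) /\
  (forall t xi, 0 <= t < t0 -> xi < q1 c1 c2 t0 0 ->
     u c1 c2 t0 t (y_left c1 c2 t0 t xi) =
     (c1 ^ 2 * exp (- c1 * (t - t0)) - c2 ^ 2 * exp (- c2 * (t - t0))) * exp xi
     / (LL c1 c2 + Al c1 c2 t0 t * exp xi)).
Proof.
  repeat split; intros.
  - now apply LL_pos.
  - pose proof (pos_c1_sub_c2 c1 c2 hc1 hc2 1 _ Rlt_0_1 (exp_pos (LL c1 c2 * (t - t0)))).
    lra.
  - pose proof (pos_c1_sub_c2 c1 c2 hc1 hc2 _ 1 (exp_pos (LL c1 c2 * (t - t0))) Rlt_0_1).
    lra.
  - now apply y_left_denom_pos.
  - now apply y_right_denom_pos.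
  - now apply y_left_0.
  - now apply y_right_0.
  - now apply y_left_lt_q1.
  - now apply y_right_gt_q2.
  - rewrite u_y_left by (auto; lra). now apply y_left_derive.
  - rewrite u_y_right by (auto; lra). now apply y_right_derive.
  - rewrite u_y_left by (auto; lra). reflexivity.
Qed.
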